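(* Let $\phi:\mathbb{R}\to\mathbb{R}$ be differentiable and $f(z)=W_d\phi(W_{d-1}\phi(\cdots\phi(W_1z)\cdots))$ with $W_i\in\mathbb{R}^{k_i\times k_{i-1}}$, $k_d=k_0$. Let $x\in\mathbb{R}^{k_0}$ with $\|x\|_2=1$, and run gradient descent with learning rate $\gamma>0$ on $\mathcal{L}(x,f)=\frac12\|x-f(x)\|_2^2$. Suppose $W_d^{(0)}=x{a^{(0)}}^T$, $W_1^{(0)}=b^{(0)}x^T$ with $a^{(0)}\in\mathbb{R}^{k_{d-1}}$, $b^{(0)}\in\mathbb{R}^{k_1}$ such that $a_j^{(0)}=a_1^{(0)}$ for all $j$ and $b_l^{(0)}=b_1^{(0)}$ for all $l$, and $W_i^{(0)}=w_i^{(0)}\mathbf{1}_{k_i\times k_{i-1}}$ with $w_i^{(0)}\in\mathbb{R}$ for $i\in\{2,\dots,d-1\}$. Then for all time steps $t$, $W_d^{(t)}=x{a^{(t)}}^T$, $W_1^{(t)}=b^{(t)}x^T$ with $a_j^{(t)}=a_1^{(t)}$ for all $j\in[k_{d-1}]$, $b_l^{(t)}=b_1^{(t)}$ for all $l\in[k_1]$, and $W_i^{(t)}=w_i^{(t)}\mathbf{1}_{k_i\times k_{i-1}}$ for some $w_i^{(t)}\in\mathbb{R}$, $i\in\{2,\dots,d-1\}$.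
   Context: $\phi$ is applied coordinatewise; $\mathbf{1}_{m\times n}$ is the $m\times n$ all-ones matrix. Gradient descent updates each $W_i\leftarrow W_i-\gamma\nabla_{W_i}\mathcal{L}$ simultaneously. *)

From HB Require Import structures.
From mathcomp Require Import all_boot all_order all_algebra.
From mathcomp Require Import all_classical all_reals all_analysis.
Set Implicit Arguments. Unset Strict Implicit. Unset Printing Implicit Defensive.
Import Order.TTheory GRing.Theory Num.Theory.
Local Open Scope ring_scope.

(* Layers are indexed from 0: layer n is the matrix W n : 'M_(k n.+1, k n),
   which is the paper's W_{n+1}.  Depth d: layers 0 .. d-1 are used. *)
Section Net.
Variables (R : realType) (phi : R -> R) (d : nat) (k : nat -> nat).
Hypothesis hk : k d = k 0%N.

Definition weights := forall n : nat, 'M[R]_(k n.+1, k n).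

Definition act (n : nat) : R -> R := if n == 0%N then id else phi.

Fixpoint pre (W : weights) (z : 'cV[R]_(k 0)) (n : nat) : 'cV[R]_(k n) :=
  match n with
  | 0%N => z
  | n'.+1 => W n' *m map_mx (act n') (pre W z n')
  end.

Definition net (W : weights) (z : 'cV[R]_(k 0)) : 'cV[R]_(k 0) :=
  castmx (hk, erefl 1%N) (pre W z d).

Definition loss (x : 'cV[R]_(k 0)) (W : weights) : R :=
  2^-1 * \sum_(j < k 0) (x j 0 - net W x j 0) ^+ 2.

Definition unit_dir (i a b : nat) : weights :=
  fun n => \matrix_(p, q) (((n == i) && (p == a :> nat) && (q == b :> nat))%:R : R).

Definition grad (x : 'cV[R]_(k 0)) (W : weights) : weights :=
  fun i => \matrix_(a, b)
    derive1 (fun s : R => loss x (fun n => W n + s *: unit_dir i a b n)) 0.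

Definition gd_step (gamma : R) (x : 'cV[R]_(k 0)) (W : weights) : weights :=
  fun n => W n - gamma *: grad x W n.

Fixpoint gd (gamma : R) (x : 'cV[R]_(k 0)) (W0 : weights) (t : nat) : weights :=
  match t with
  | 0%N => W0
  | t'.+1 => gd_step gamma x (gd gamma x W0 t')
  end.

End Net.

(* Write pre_i for the pre-activation vector entering layer i.  By the chain
   rule, the derivative of the loss in entry (p, q) of layer i is
   act(pre_i q) times the derivative D_i(p) of the loss with respect to a
   shift of coordinate p of pre_(i+1).  Along the invariant every layer but the
   last has equal rows, so each pre_(i+1) is a constant vector and the first
   factor does not depend on q; every layer but the first has equal columns,
   so the loss is unchanged when two coordinates of pre_(i+1) are swapped and
   D_i(p) does not depend on p.  Hence the gradient of a middle layer is
   constant and that of the first layer is (constant vector) x^T.  For the last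
   layer D(p) is minus the p-th coordinate of x - f(x), and f(x) = (a . phi(pre)) x
   is a multiple of x, so its gradient is x (constant vector)^T as well. *)

From HB Require Import structures.
From mathcomp Require Import all_boot all_order all_algebra.
From mathcomp Require Import all_classical all_reals all_analysis.
From mathcomp Require Import perm ring.
Set Implicit Arguments.
Unset Strict Implicit.
Unset Printing Implicit Defensive.
Import Order.TTheory GRing.Theory Num.Theory.
Local Open Scope ring_scope.

Definition equal_rows {T : Type} {r c : nat} (M : 'M[T]_(r, c)) : Prop :=
  forall p p' q, M p q = M p' q.

Definition equal_cols {T : Type} {r c : nat} (M : 'M[T]_(r, c)) : Prop :=
  forall p q q', M p q = M p q'.

Lemma equal_rows_mulmx (R : pzSemiRingType) r c s (A : 'M[R]_(r, c)) (B : 'M[R]_(c, s)) :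
  equal_rows A -> equal_rows (A *m B).
Proof. by move=> eqA p p' q; rewrite !mxE; apply: eq_bigr => j _; rewrite (eqA p p'). Qed.

Lemma equal_rows_cols_const_mx (V : nmodType) r c (M : 'M[V]_(r, c)) :
  equal_rows M -> equal_cols M -> exists w, M = const_mx w.
Proof.
case: r M => [|r] M eqr eqc; first by exists 0; apply/matrixP => -[].
case: c M eqr eqc => [|c] M eqr eqc; first by exists 0; apply/matrixP => ? [].
by exists (M ord0 ord0); apply/matrixP => p q; rewrite mxE (eqr p ord0); apply: eqc.
Qed.

Lemma mul_col_trE (R : pzSemiRingType) r c (u : 'cV[R]_r) (v : 'cV[R]_c) p q :
  (u *m v^T) p q = u p 0 * v q 0.
Proof. by rewrite !mxE big_ord1 !mxE. Qed.

Lemma gd_stepE (R : realType) (phi : R -> R) (d : nat) (k : nat -> nat)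
    (hk : k d = k 0%N) (gamma : R) (x : 'cV[R]_(k 0%N)) (W : weights R k) i p q :
  gd_step phi hk gamma x W i p q = W i p q - gamma * grad phi hk x W i p q.
Proof. by rewrite !mxE. Qed.

Section Nudge.
Variables (R : realType) (phi : R -> R) (k : nat -> nat).
Variables (x : 'cV[R]_(k 0%N)) (W : weights R k).

Definition nudge (i a : nat) (u : R) (n : nat) : 'cV[R]_(k n.+1) :=
  \col_p (if (n == i) && (p == a :> nat) then u else 0).

Fixpoint pre_nudge (i a : nat) (u : R) (n : nat) : 'cV[R]_(k n) :=
  match n with
  | 0%N => x
  | n'.+1 => W n' *m map_mx (act phi n') (pre_nudge i a u n') + nudge i a u n'
  end.

Lemma nudge_eq0 i a u n : (n == i) = false -> nudge i a u n = 0.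
Proof. by move=> ni; apply/matrixP => p q; rewrite !mxE ni. Qed.

Lemma pre_nudge_le i a u n : (n <= i)%N -> pre_nudge i a u n = pre phi W x n.
Proof.
elim: n => [//|n IHn] ltni /=.
by rewrite IHn ?(ltnW ltni) // nudge_eq0 ?addr0 ?ltn_eqF.
Qed.

Lemma pre_nudge_succE i a u (p : 'I_(k i.+1)) :
  pre_nudge i a u i.+1 p 0 = pre phi W x i.+1 p 0 + (if p == a :> nat then u else 0).
Proof. by rewrite /= pre_nudge_le // !mxE eqxx. Qed.

Lemma pre_add_unit_dir i a (b : 'I_(k i)) s n :
  pre phi (fun n => W n + s *: unit_dir R k i a b n) x n =
  pre_nudge i a (s * act phi i (pre phi W x i b 0)) n.
Proof.
elim: n => [//|n IHn] /=; rewrite IHn mulmxDl; congr (_ + _).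
apply/matrixP => p q; rewrite !mxE.
case: (eqVneq n i) => [en|ni]; last first.
  by rewrite big1 // => j _; rewrite !mxE (negbTE ni) mulr0 mul0r.
subst n.
rewrite (bigD1 b) //= big1 => [|j jb]; last first.
  by rewrite !mxE (negbTE (jb : j != b :> nat)) andbF mulr0 mul0r.
rewrite !mxE !eqxx andbT addr0 pre_nudge_le // (ord1 q).
by case: (p == a :> nat); rewrite ?mulr1 ?mulr0 ?mul0r.
Qed.

Hypothesis phi_derivable : forall z : R, derivable phi z 1.

Lemma differentiable_act n z : differentiable (act phi n) z.
Proof. by rewrite /act; case: (n == 0%N) => //; apply/derivable1_diffP. Qed.

Lemma differentiable_pre_nudge i a n (p : 'I_(k n)) z :
  differentiable (fun u => pre_nudge i a u n p 0) z.
Proof.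
elim: n p z => [|n IHn] p z /=; first exact: differentiable_cst.
have -> : (fun u => (W n *m map_mx (act phi n) (pre_nudge i a u n) + nudge i a u n) p 0)
    = (fun u => \sum_j W n p j * act phi n (pre_nudge i a u n j 0)
                + if (n == i) && (p == a :> nat) then u else 0).
  by apply/funext => u; rewrite !mxE; congr (_ + _); apply: eq_bigr => j _; rewrite mxE.
apply: (@differentiableD _ _ _ (fun u => \sum_j W n p j * act phi n (pre_nudge i a u n j 0))
  (fun u => if (n == i) && (p == a :> nat) then u else 0)); last by case: (_ && _).
rewrite -fct_sumE; apply: differentiable_sum => j.
apply: differentiableM => //.
exact: differentiable_comp (IHn j z) (differentiable_act _ _).
Qed.

Section Loss.
Variables (d : nat) (hk : k d = k 0%N).

Definition nudged_loss (i a : nat) (u : R) : R :=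
  2^-1 * \sum_(j < k 0%N) (x j 0 - castmx (hk, erefl 1%N) (pre_nudge i a u d) j 0) ^+ 2.

Lemma differentiable_nudged_loss i a z : differentiable (nudged_loss i a) z.
Proof.
have -> : nudged_loss i a = cst 2^-1 * \sum_(j < k 0%N)
    (cst (x j 0) - (fun u => pre_nudge i a u d (cast_ord (esym hk) j) 0)) ^+ 2.
  apply/funext => u; rewrite /nudged_loss /= fct_sumE; congr (_ * _).
  by apply: eq_bigr => j _; rewrite exprfctE castmxE /= cast_ord_id.
apply: differentiableM => //; apply: differentiable_sum => j.
apply: differentiableX; apply: differentiableB => //.
exact: differentiable_pre_nudge.
Qed.

Lemma gradE i a (b : 'I_(k i)) :
  grad phi hk x W i a b = act phi i (pre phi W x i b 0) * derive1 (nudged_loss i a) 0.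
Proof.
rewrite /grad mxE.
set h := act phi i (pre phi W x i b 0).
have -> : (fun s => loss phi hk x (fun n => W n + s *: unit_dir R k i a b n))
    = nudged_loss i a \o (fun s => s * h).
  by apply/funext => s; rewrite /loss /net /= pre_add_unit_dir.
have scale_derive : is_derive (0 : R) 1 (fun s : R => s * h) h.
  by apply: is_derive_eq; rewrite scale0r add0r; exact: mulr1.
rewrite derive1_comp ?mul0r; first last.
- exact/derivable1_diffP/differentiable_nudged_loss.
- exact: ex_derive.
have -> : derive1 (fun s : R => s * h) 0 = h by rewrite derive1E derive_val.
exact: mulrC.
Qed.

Lemma eq_nudged_loss i (a a' : 'I_(k i.+1)) : (i.+2 <= d)%N ->
  equal_rows (W i) -> equal_cols (W i.+1) -> nudged_loss i a = nudged_loss i a'.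
Proof.
move=> le_i2d eqr eqc.
have tpermE j : (tperm a a' j == a :> nat) = (j == a' :> nat).
  by change ((tperm a a' j == a) = (j == a')); rewrite -{2}(tpermR a a') (inj_eq perm_inj).
have pre_eq n u : (i.+2 <= n)%N -> pre_nudge i a u n = pre_nudge i a' u n.
  elim: n => [//|n IHn] le_i2n.
  case: (eqVneq n i.+1) => [en|ni1]; last first.
    have le_i2n' : (i.+2 <= n)%N by rewrite ltn_neqAle eq_sym ni1 -ltnS.
    by rewrite /= (IHn le_i2n') !(nudge_eq0 _ _ (gtn_eqF (ltnW le_i2n'))).
  subst n; apply/matrixP => p q.
  rewrite /= !pre_nudge_le // !(nudge_eq0 _ _ (gtn_eqF (ltnSn i))) !mxE !addr0.
  rewrite (reindex_inj (@perm_inj _ (tperm a a'))) /=; apply: eq_bigr => j _.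
  rewrite !mxE (eqc p (tperm a a' j) j) tpermE; congr (_ * act phi _ (_ + _)).
  by apply: eq_bigr => l _; rewrite (eqr (tperm a a' j) j).
by apply/funext => u; rewrite /nudged_loss pre_eq.
Qed.

End Loss.

Lemma derive1_nudged_loss_last i (hk : k i.+1 = k 0%N) (a : 'I_(k i.+1)) :
  derive1 (nudged_loss hk i a) 0 =
  - (castmx (esym hk, erefl 1%N) x a 0 - pre phi W x i.+1 a 0).
Proof.
set j0 := cast_ord hk a.
have j0K : cast_ord (esym hk) j0 = a by apply: val_inj.
set r := x j0 0 - pre phi W x i.+1 a 0.
set S := \sum_(j < k 0%N | j != j0)
  (x j 0 - pre phi W x i.+1 (cast_ord (esym hk) j) 0) ^+ 2.
have -> : nudged_loss hk i a = (fun u => 2^-1 * ((r - u) ^+ 2 + S)).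
  apply/funext => u; rewrite /nudged_loss (bigD1 j0) //; congr (2^-1 * (_ + _)).
    by rewrite castmxE cast_ord_id j0K pre_nudge_succE eqxx opprD addrA.
  apply: eq_bigr => j jj0; rewrite castmxE cast_ord_id pre_nudge_succE.
  suff -> : (cast_ord (esym hk) j == a :> nat) = false by rewrite addr0.
  by apply: contraNF jj0 => /eqP eja; apply/eqP/val_inj; rewrite /= -eja.
have quad_derive : is_derive (0 : R) 1 (fun u : R => 2^-1 * ((r - u) ^+ 2 + S)) (- r).
  by apply: is_derive_eq; rewrite /GRing.scale /=; field.
rewrite derive1E derive_val castmxE /=.
by congr (- (x _ _ - _)); apply: val_inj.
Qed.

End Nudge.

Definition tied_weights (R : realType) (m : nat) (k : nat -> nat)
    (hk : k m.+2 = k 0%N) (x : 'cV[R]_(k 0%N)) (W : weights R k) : Prop :=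
  (exists a : 'cV[R]_(k m.+1),
      (forall j j', a j 0 = a j' 0) /\ W m.+1 = castmx (esym hk, erefl 1%N) x *m a^T) /\
  (exists b : 'cV[R]_(k 1%N),
      (forall l l', b l 0 = b l' 0) /\ W 0%N = b *m x^T) /\
  (forall i, (0 < i <= m)%N -> exists w, W i = const_mx w).

Section GradientStep.
Variables (R : realType) (phi : R -> R) (m : nat) (k : nat -> nat).
Hypothesis phi_derivable : forall z : R, derivable phi z 1.
Variables (hk : k m.+2 = k 0%N) (x : 'cV[R]_(k 0%N)) (gamma : R) (W : weights R k).
Local Notation X := (castmx (esym hk, erefl 1%N) x).
Variables (a : 'cV[R]_(k m.+1)) (b : 'cV[R]_(k 1%N)).
Hypotheses (a_const : forall j j', a j 0 = a j' 0) (W_out : W m.+1 = X *m a^T).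
Hypotheses (b_const : forall l l', b l 0 = b l' 0) (W_in : W 0%N = b *m x^T).
Hypothesis W_mid : forall i, (0 < i <= m)%N -> exists w, W i = const_mx w.

Lemma tied_equal_rows i : (i <= m)%N -> equal_rows (W i).
Proof.
case: i => [|i] le_im p p' q; first by rewrite W_in !mul_col_trE (b_const p p').
by have [w ->] := @W_mid i.+1 le_im; rewrite !mxE.
Qed.

Lemma tied_equal_cols i : (0 < i <= m.+1)%N -> equal_cols (W i).
Proof.
case/andP=> lt0i; rewrite leq_eqVlt => /orP[/eqP-> | lt_im] p q q'.
  by rewrite W_out !mul_col_trE (a_const q q').
have [w ->] : exists w, W i = const_mx w by apply: W_mid; rewrite lt0i.
by rewrite !mxE.
Qed.

Lemma tied_equal_rows_pre i : (i <= m)%N -> equal_rows (pre phi W x i.+1).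
Proof. by move=> le_im; apply: equal_rows_mulmx; apply: tied_equal_rows. Qed.

Lemma tied_pre_output p :
  pre phi W x m.+2 p 0 = (\sum_q a q 0 * phi (pre phi W x m.+1 q 0)) * X p 0.
Proof.
rewrite [pre _ _ _ _]/= W_out mxE mulr_suml.
by apply: eq_bigr => q _; rewrite mul_col_trE mxE [RHS]mulrC mulrA.
Qed.

Lemma gd_step_output : exists a' : 'cV[R]_(k m.+1),
  (forall j j', a' j 0 = a' j' 0) /\ gd_step phi hk gamma x W m.+1 = X *m a'^T.
Proof.
pose h q := phi (pre phi W x m.+1 q 0).
pose s := \sum_q a q 0 * h q.
exists (\col_q (a q 0 + gamma * (1 - s) * h q)); split.
  by move=> j j'; rewrite !mxE (a_const j j') /h (tied_equal_rows_pre (leqnn m) j j').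
apply/matrixP => p q.
rewrite gd_stepE (gradE _ _ phi_derivable) derive1_nudged_loss_last tied_pre_output.
rewrite W_out !mul_col_trE [in RHS]mxE -/s; change (act phi m.+1) with phi; rewrite -/(h q).
ring.
Qed.

Lemma gd_step_input : exists b' : 'cV[R]_(k 1%N),
  (forall l l', b' l 0 = b' l' 0) /\ gd_step phi hk gamma x W 0%N = b' *m x^T.
Proof.
pose D p := derive1 (nudged_loss phi x W hk 0 p) 0.
exists (\col_p (b p 0 - gamma * D p)); split.
  move=> l l'; rewrite !mxE (b_const l l') /D.
  rewrite (eq_nudged_loss phi x hk l l') //.
    exact: tied_equal_rows.
  exact: tied_equal_cols.
apply/matrixP => p q.
rewrite gd_stepE (gradE _ _ phi_derivable) W_in !mul_col_trE [in RHS]mxE -/(D p).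
change (act phi 0) with (@id R); rewrite /=; ring.
Qed.

Lemma gd_step_middle i : (0 < i <= m)%N -> exists w, gd_step phi hk gamma x W i = const_mx w.
Proof.
case: i => [//|i] /= lt_im.
apply: equal_rows_cols_const_mx => [p p' q | p q q'];
  rewrite !gd_stepE !(gradE _ _ phi_derivable).
  rewrite (tied_equal_rows lt_im p p') (eq_nudged_loss phi x hk p p') //.
    exact: tied_equal_rows.
  by apply: tied_equal_cols; rewrite ltnS.
rewrite (tied_equal_cols _ p q q') ?(tied_equal_rows_pre (ltnW lt_im) q q') //.
exact: ltnW lt_im.
Qed.

End GradientStep.

Lemma tied_weights_gd_step (R : realType) (phi : R -> R) (m : nat) (k : nat -> nat)
    (hk : k m.+2 = k 0%N) (x : 'cV[R]_(k 0%N)) (gamma : R) (W : weights R k) :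
  (forall z : R, derivable phi z 1) ->
  tied_weights hk x W -> tied_weights hk x (gd_step phi hk gamma x W).
Proof.
move=> phi_derivable [[a [a_const W_out]] [[b [b_const W_in]] W_mid]].
split; [|split].
- exact: (gd_step_output phi_derivable gamma a_const W_out b_const W_in W_mid).
- exact: (gd_step_input phi_derivable gamma a_const W_out b_const W_in W_mid).
- exact: (gd_step_middle phi_derivable gamma a_const W_out b_const W_in W_mid).
Qed.

Lemma tied_weights_gd (R : realType) (phi : R -> R) (m : nat) (k : nat -> nat)
    (hk : k m.+2 = k 0%N) (x : 'cV[R]_(k 0%N)) (gamma : R) (W0 : weights R k) :
  (forall z : R, derivable phi z 1) ->
  tied_weights hk x W0 -> forall t, tied_weights hk x (gd phi hk gamma x W0 t).
Proof. by move=> phi_derivable tied0; elim=> [//|t]; apply: tied_weights_gd_step. Qed.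

Theorem mainTheorem10 (R : realType) (phi : R -> R)
  (hphi : forall z : R, derivable phi z 1)
  (m : nat) (k : nat -> nat) (hk : k m.+2 = k 0%N)
  (x : 'cV[R]_(k 0%N)) (hx : \sum_(j < k 0%N) x j 0 ^+ 2 = 1)
  (gamma : R) (hgamma : 0 < gamma)
  (W0 : weights R k)
  (hWd : exists a : 'cV[R]_(k m.+1),
      (forall j j' : 'I_(k m.+1), a j 0 = a j' 0) /\
      W0 m.+1 = castmx (esym hk, erefl 1%N) x *m a^T)
  (hW1 : exists b : 'cV[R]_(k 1%N),
      (forall l l' : 'I_(k 1%N), b l 0 = b l' 0) /\ W0 0%N = b *m x^T)
  (hWi : forall i : nat, (0 < i <= m)%N -> exists w : R, W0 i = const_mx w) :
  forall t : nat,
    let W := gd phi hk gamma x W0 t in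
    (exists a : 'cV[R]_(k m.+1),
        (forall j j' : 'I_(k m.+1), a j 0 = a j' 0) /\
        W m.+1 = castmx (esym hk, erefl 1%N) x *m a^T) /\
    (exists b : 'cV[R]_(k 1%N),
        (forall l l' : 'I_(k 1%N), b l 0 = b l' 0) /\ W 0%N = b *m x^T) /\
    (forall i : nat, (0 < i <= m)%N -> exists w : R, W i = const_mx w).
Proof.
exact: tied_weights_gd hphi (conj hWd (conj hW1 hWi)).
Qed.
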